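(* Let $(V,L,\varphi,E)$ be a valuation system. Then $\varphi$ is $\Pi$-extendible if and only if there exist a sublattice $C$ of $V$ and a valuation $\psi:C\to E$ such that $(V,C,\psi,E)$ is $\Pi$-complete and $\psi$ extends $\varphi$.
   Context: A valuation system $(V,L,\varphi,E)$ consists of: (i) a lattice $V$ which is $\sigma$-distributive, i.e. for every $a\in V$ and every sequence $(b_n)$ in $V$ whose infimum exists, $\bigwedge_n(a\vee b_n)$ exists and equals $a\vee\bigwedge_n b_n$, and dually for suprema; (ii) a sublattice $L$ of $V$; (iii) a partially ordered abelian group $E$ which is R-complete: whenever $x_1\ge x_2\ge\cdots$ and $y_1\ge y_2\ge\cdots$ in $E$ are such that $\bigwedge_n(x_n+y_n)$ exists, then $\bigwedge_n x_n$ and $\bigwedge_n y_n$ exist, and dually for increasing sequences and suprema; (iv) a valuation $\varphi:L\to E$, i.e. an order-preserving map with $\varphi(a\wedge b)+\varphi(a\vee b)=\varphi(a)+\varphi(b)$. A map $\psi:C\to E$ extends $\varphi:L\to E$ if $L\subseteq C$ and $\psi|_L=\varphi$. A decreasing sequence $a_1\ge a_2\ge\cdots$ in $L$ is $\varphi$-convergent if $\bigwedge_n a_n$ exists in $V$ and $\bigwedge_n\varphi(a_n)$ exists in $E$. The system is $\Pi$-complete if for every $\varphi$-convergent decreasing sequence $(a_n)$ in $L$ we have $\bigwedge_n a_n\in L$ and $\varphi(\bigwedge_n a_n)=\bigwedge_n\varphi(a_n)$. Let $\Pi L:=\{\bigwedge_n a_n: (a_n)\text{ a }\varphi\text{-convergent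 decreasing sequence in }L\}$ (a sublattice of $V$). $\varphi$ is $\Pi$-extendible if there is a valuation $\Pi\varphi:\Pi L\to E$ with $\Pi\varphi(\bigwedge_n a_n)=\bigwedge_n\varphi(a_n)$ for every $\varphi$-convergent decreasing sequence $(a_n)$ in $L$. *)

From HB Require Import structures.
From mathcomp Require Import all_boot all_order all_algebra.
Set Implicit Arguments. Unset Strict Implicit. Unset Printing Implicit Defensive.
Import Order.TTheory GRing.Theory Num.Theory.
Local Open Scope order_scope.

Definition is_inf {d} {T : porderType d} (b : nat -> T) (x : T) : Prop :=
  (forall n, x <= b n) /\ (forall y, (forall n, y <= b n) -> y <= x).
Definition is_sup {d} {T : porderType d} (b : nat -> T) (x : T) : Prop :=
  (forall n, b n <= x) /\ (forall y, (forall n, b n <= y) -> x <= y).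

Definition decreasing {d} {T : porderType d} (a : nat -> T) : Prop :=
  forall n, a n.+1 <= a n.
Definition increasing {d} {T : porderType d} (a : nat -> T) : Prop :=
  forall n, a n <= a n.+1.

Definition sigma_distributive {d} (V : latticeType d) : Prop :=
  (forall (a : V) (b : nat -> V) (x : V), is_inf b x ->
      is_inf (fun n => a `|` b n) (a `|` x)) /\
  (forall (a : V) (b : nat -> V) (x : V), is_sup b x ->
      is_sup (fun n => a `&` b n) (a `&` x)).

Definition sublattice {d} {V : latticeType d} (L : V -> Prop) : Prop :=
  forall a b, L a -> L b -> L (a `&` b) /\ L (a `|` b).

Definition po_group (E : porderZmodType) : Prop :=
  forall x y z : E, (x <= y)%R -> (x + z <= y + z)%R.

Definition R_complete (E : porderZmodType) : Prop :=
  (forall x y : nat -> E, decreasing x -> decreasing y ->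
     (exists s, is_inf (fun n => x n + y n)%R s) ->
     (exists s, is_inf x s) /\ (exists t, is_inf y t)) /\
  (forall x y : nat -> E, increasing x -> increasing y ->
     (exists s, is_sup (fun n => x n + y n)%R s) ->
     (exists s, is_sup x s) /\ (exists t, is_sup y t)).

(* (iv) valuation on the subset L (a map L -> E is represented by a total
   function whose values outside L are irrelevant) *)
Definition valuation {d} {V : latticeType d} {E : porderZmodType}
  (L : V -> Prop) (phi : V -> E) : Prop :=
  (forall a b, L a -> L b -> a <= b -> (phi a <= phi b)%R) /\
  (forall a b, L a -> L b -> (phi (a `&` b) + phi (a `|` b) = phi a + phi b)%R).

Definition valuation_system {d} (V : latticeType d) (L : V -> Prop)
  (E : porderZmodType) (phi : V -> E) : Prop :=
  sigma_distributive V /\ sublattice L /\ po_group E /\ R_complete E /\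
  valuation L phi.

Definition extends {d} {V : latticeType d} {E : porderZmodType}
  (L : V -> Prop) (phi : V -> E) (C : V -> Prop) (psi : V -> E) : Prop :=
  (forall a, L a -> C a) /\ (forall a, L a -> psi a = phi a).

Definition phi_convergent {d} {V : latticeType d} {E : porderZmodType}
  (L : V -> Prop) (phi : V -> E) (a : nat -> V) : Prop :=
  (forall n, L (a n)) /\ decreasing a /\
  (exists x, is_inf a x) /\ (exists s, is_inf (fun n => phi (a n)) s).

Definition Pi_complete {d} {V : latticeType d} {E : porderZmodType}
  (L : V -> Prop) (phi : V -> E) : Prop :=
  forall a : nat -> V, phi_convergent L phi a ->
  forall x, is_inf a x -> L x /\ is_inf (fun n => phi (a n)) (phi x).

Definition PiL {d} {V : latticeType d} {E : porderZmodType}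
  (L : V -> Prop) (phi : V -> E) : V -> Prop :=
  fun x => exists a : nat -> V, phi_convergent L phi a /\ is_inf a x.

Definition Pi_extendible {d} {V : latticeType d} {E : porderZmodType}
  (L : V -> Prop) (phi : V -> E) : Prop :=
  exists Piphi : V -> E, valuation (PiL L phi) Piphi /\
    forall a : nat -> V, phi_convergent L phi a ->
    forall x, is_inf a x -> is_inf (fun n => phi (a n)) (Piphi x).

(* For the forward direction take C := ΠL and ψ := Πφ. ΠL is a sublattice:
   infima of decreasing sequences commute with meets, and with joins by
   σ-distributivity, while R-completeness splits the infimum of
   φ(a_n ∧ c_n) + φ(a_n ∨ c_n) = φ(a_n) + φ(c_n) into the two infima that make
   (a_n ∧ c_n) and (a_n ∨ c_n) φ-convergent. Π-completeness of (ΠL, Πφ) is a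
   diagonal argument: if x_k = ∧_n A_{k,n}, then b_n := A_{0,n} ∧ ... ∧ A_{n,n}
   is a decreasing sequence in L with ∧_n b_n = ∧_k x_k and
   ∧_n φ(b_n) = ∧_k Πφ(x_k). Conversely, a Π-complete extension (C, ψ) contains
   the infimum of every φ-convergent sequence and takes there the value
   ∧_n φ(a_n), so ψ restricted to ΠL ⊆ C is the required Πφ. *)
From mathcomp Require Import all_boot all_order all_algebra.
From Stdlib Require Import IndefiniteDescription.
Set Implicit Arguments. Unset Strict Implicit. Unset Printing Implicit Defensive.
Import Order.TTheory GRing.Theory.
Local Open Scope order_scope.

Section SequenceInfima.
Variables (disp : Order.disp_t) (T : porderType disp).

Lemma is_inf_unique (b : nat -> T) x y : is_inf b x -> is_inf b y -> x = y.
Proof. by move=> [xb infx] [yb infy]; apply/le_anti; rewrite infx ?infy. Qed.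

Lemma is_inf_cst (a : T) : is_inf (fun _ => a) a.
Proof. by split=> [n|y /(_ 0%N)]. Qed.

Lemma eq_is_inf (f g : nat -> T) x :
  (forall n, f n = g n) -> is_inf f x -> is_inf g x.
Proof.
move=> efg [fx infx]; split=> [n|y yg]; first by rewrite -efg.
by apply: infx => n; rewrite efg.
Qed.

Lemma decreasing_le (a : nat -> T) :
  decreasing a -> forall m n, (m <= n)%N -> a n <= a m.
Proof.
move=> Da m n /subnKC <-; elim: (n - m)%N => [|k IHk]; first by rewrite addn0.
by rewrite addnS (le_trans (Da _)).
Qed.

End SequenceInfima.

Section LatticeInfima.
Variables (disp : Order.disp_t) (V : latticeType disp).

Lemma is_infI (a c : nat -> V) x y :
  is_inf a x -> is_inf c y -> is_inf (fun n => a n `&` c n) (x `&` y).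
Proof.
move=> [ax infx] [cy infy]; split=> [n|z zac]; first exact: leI2.
by rewrite lexI infx ?infy // => n; move: (zac n); rewrite lexI => /andP[].
Qed.

Lemma is_infU (a c : nat -> V) x y : sigma_distributive V ->
  decreasing a -> decreasing c -> is_inf a x -> is_inf c y ->
  is_inf (fun n => a n `|` c n) (x `|` y).
Proof.
move=> [distr _] Da Dc infa infc; split=> [n|z zac].
  by apply: leU2; [case: infa | case: infc].
have zcx m : z <= c m `|` x.
  apply: (distr _ _ _ infa).2 => n; apply: le_trans (zac (maxn n m)) _.
  by rewrite joinC leU2 // decreasing_le // ?leq_maxl ?leq_maxr.
by apply: (distr _ _ _ infc).2 => m; rewrite joinC.
Qed.

Fixpoint meet_upto (f : nat -> V) (m : nat) : V :=
  if m is m'.+1 then meet_upto f m' `&` f m else f 0%N.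

Lemma meet_upto_le (f : nat -> V) m k : (k <= m)%N -> meet_upto f m <= f k.
Proof.
elim: m => [|m IHm] /=; first by rewrite leqn0 => /eqP ->.
rewrite leq_eqVlt ltnS => /orP[/eqP ->|/IHm]; first exact: leIr.
exact/le_trans/leIl.
Qed.

Lemma le_meet_upto (f : nat -> V) m y :
  (forall k, (k <= m)%N -> y <= f k) -> y <= meet_upto f m.
Proof.
elim: m => [|m IHm] yf /=; first exact: yf.
by rewrite lexI yf // IHm // => k km; rewrite yf // ltnW.
Qed.

Lemma meet_upto_in (L : V -> Prop) (f : nat -> V) m :
  sublattice L -> (forall k, L (f k)) -> L (meet_upto f m).
Proof. by move=> Lsub Lf; elim: m => [|m IHm] //=; case: (Lsub _ _ IHm (Lf m.+1)). Qed.

Definition diag_meet (A : nat -> nat -> V) (n : nat) : V :=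
  meet_upto (fun k => A k n) n.

Lemma diag_meet_le (A : nat -> nat -> V) k n :
  (k <= n)%N -> diag_meet A n <= A k n.
Proof. exact: meet_upto_le. Qed.

Lemma diag_meet_decreasing (A : nat -> nat -> V) :
  (forall k, decreasing (A k)) -> decreasing (diag_meet A).
Proof.
move=> DA n; apply: le_trans (leIl _ _) _.
by apply: le_meet_upto => k kn; apply: le_trans (DA k n); apply: meet_upto_le.
Qed.

Lemma le_diag_meet (A : nat -> nat -> V) (xs : nat -> V) n :
  decreasing xs -> (forall k m, xs k <= A k m) -> xs n <= diag_meet A n.
Proof.
move=> Dxs xsA; apply: le_meet_upto => k kn.
exact: le_trans (decreasing_le Dxs kn) (xsA k n).
Qed.

Lemma diag_meet_inf (A : nat -> nat -> V) (xs : nat -> V) x :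
  (forall k, decreasing (A k)) -> (forall k, is_inf (A k) (xs k)) ->
  is_inf xs x -> is_inf (diag_meet A) x.
Proof.
move=> DA infA [xxs infx]; split=> [n|z zdiag].
  by apply: le_meet_upto => k _; apply: le_trans (xxs k) _; case: (infA k).
apply: infx => k; apply: (infA k).2 => n.
apply: le_trans (zdiag (maxn n k)) _; apply: le_trans (diag_meet_le _ (leq_maxr n k)) _.
exact: decreasing_le (leq_maxl n k).
Qed.

End LatticeInfima.

Section POGroupInfima.
Variables (E : porderZmodType) (HE : po_group E).
Local Open Scope ring_scope.

Lemma po_group_lerD (x1 x2 y1 y2 : E) :
  x1 <= y1 -> x2 <= y2 -> x1 + x2 <= y1 + y2.
Proof.
move=> le1 le2; apply: le_trans (HE x2 le1) _.
by rewrite addrC [y1 + _]addrC; apply: HE.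
Qed.

Lemma po_group_lerBlDr (x y z : E) : x - y <= z <-> x <= z + y.
Proof.
split=> [/(HE y)|/(HE (- y))]; first by rewrite subrK.
by rewrite addrK.
Qed.

Lemma is_infD (x y : nat -> E) s t : decreasing x -> decreasing y ->
  is_inf x s -> is_inf y t -> is_inf (fun n => x n + y n) (s + t).
Proof.
move=> Dx Dy [xs infs] [yt inft]; split=> [n|z zxy].
  exact: po_group_lerD.
have zxy' m n : z <= y n + x m.
  rewrite addrC; apply: le_trans (zxy (maxn m n)) _.
  by apply: po_group_lerD; apply: decreasing_le; rewrite ?leq_maxl ?leq_maxr.
have zt m : z - x m <= t by apply: inft => n; apply/po_group_lerBlDr.
apply/po_group_lerBlDr; apply: infs => m.
by apply/po_group_lerBlDr; rewrite addrC -po_group_lerBlDr.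
Qed.

End POGroupInfima.

Lemma valuation_sub disp (V : latticeType disp) (E : porderZmodType)
    (A B : V -> Prop) (psi : V -> E) :
  (forall x, A x -> B x) -> valuation B psi -> valuation A psi.
Proof. by move=> AB [psi_mono psi_mod]; split=> a b /AB Ba /AB Bb; auto. Qed.

Section PiExtension.
Variables (disp : Order.disp_t) (V : latticeType disp) (L : V -> Prop)
  (E : porderZmodType) (phi : V -> E).

Definition Pi_extends (Piphi : V -> E) : Prop :=
  forall a : nat -> V, phi_convergent L phi a ->
  forall x, is_inf a x -> is_inf (fun n => phi (a n)) (Piphi x).

Lemma phi_convergent_cst a : L a -> phi_convergent L phi (fun _ => a).
Proof.
move=> La; split=> [//|]; split=> [//|].
by split; [exists a | exists (phi a)]; apply: is_inf_cst.
Qed.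

Lemma PiL_of_L a : L a -> PiL L phi a.
Proof.
by move=> La; exists (fun _ => a); split; [apply: phi_convergent_cst | apply: is_inf_cst].
Qed.

Lemma Pi_extends_on_L (Piphi : V -> E) :
  Pi_extends Piphi -> forall a, L a -> Piphi a = phi a.
Proof.
move=> ext a La; apply: (is_inf_unique _ (is_inf_cst (phi a))).
exact: ext (phi_convergent_cst La) _ (is_inf_cst a).
Qed.

Lemma extends_phi_convergent (C : V -> Prop) (psi : V -> E) (a : nat -> V) :
  extends L phi C psi -> phi_convergent L phi a -> phi_convergent C psi a.
Proof.
move=> [LC psi_phi] [La [Da [infa [s infs]]]].
split=> [n|]; first exact/LC/La.
split=> //; split=> //; exists s.
by apply: eq_is_inf infs => n; rewrite psi_phi.
Qed.

Lemma Pi_complete_extends (C : V -> Prop) (psi : V -> E) :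
  extends L phi C psi -> Pi_complete C psi ->
  forall a, phi_convergent L phi a -> forall x, is_inf a x ->
  C x /\ is_inf (fun n => phi (a n)) (psi x).
Proof.
move=> ext psiC a conva x infx.
have [Cx infpsi] := psiC _ (extends_phi_convergent ext conva) _ infx.
by split=> //; apply: eq_is_inf infpsi => n; rewrite ext.2 //; case: conva.
Qed.

Hypotheses (L_sub : sublattice L) (phi_val : valuation L phi).

Lemma PiL_sublattice : sigma_distributive V -> po_group E -> R_complete E ->
  sublattice (PiL L phi).
Proof.
move=> distr HE [Rdec _] x y [a [[La [Da [_ [sa infsa]]]] infx]]
  [c [[Lc [Dc [_ [sc infsc]]]] infy]].
have [phi_mono phi_mod] := phi_val.
have Lac n : L (a n `&` c n) /\ L (a n `|` c n) := L_sub (La n) (Lc n).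
have Dphi (b : nat -> V) : (forall n, L (b n)) -> decreasing b ->
    decreasing (fun n => phi (b n)) by move=> Lb Db n; apply: phi_mono.
have DI : decreasing (fun n => a n `&` c n) by move=> n; apply: leI2.
have DU : decreasing (fun n => a n `|` c n) by move=> n; apply: leU2.
have [[sI infsI] [sU infsU]] :
    (exists s, is_inf (fun n => phi (a n `&` c n)) s) /\
    (exists s, is_inf (fun n => phi (a n `|` c n)) s).
  apply: Rdec; try by apply: Dphi => // n; case: (Lac n).
  exists (sa + sc)%R; apply: eq_is_inf (is_infD HE (Dphi _ La Da) (Dphi _ Lc Dc) infsa infsc).
  by move=> n; rewrite phi_mod.
have infI := is_infI infx infy; have infU := is_infU distr Da Dc infx infy.
split.
- exists (fun n => a n `&` c n); split=> //.
  split=> [n|]; first by case: (Lac n).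
  by split=> //; split; [exists (x `&` y) | exists sI].
- exists (fun n => a n `|` c n); split=> //.
  split=> [n|]; first by case: (Lac n).
  by split=> //; split; [exists (x `|` y) | exists sU].
Qed.

Section Diagonal.
Variables (Piphi : V -> E) (A : nat -> nat -> V) (xs : nat -> V).
Hypotheses (Piphi_val : valuation (PiL L phi) Piphi) (ext : Pi_extends Piphi).
Hypothesis convA : forall k, phi_convergent L phi (A k) /\ is_inf (A k) (xs k).

Lemma diag_meet_in n : L (diag_meet A n).
Proof. by apply: meet_upto_in => // k; case: (convA k) => [[]]. Qed.

Lemma diag_meet_phi_inf s : decreasing xs ->
  is_inf (fun k => Piphi (xs k)) s -> is_inf (fun n => phi (diag_meet A n)) s.
Proof.
move=> Dxs [sxs infs]; have [phi_mono _] := phi_val.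
have LA k n : L (A k n) by case: (convA k) => [[]].
have DA k : decreasing (A k) by case: (convA k) => [[_ []]].
have PiL_xs n : PiL L phi (xs n) by exists (A n); apply: convA.
split=> [n|y ydiag].
  apply: le_trans (sxs n) _; rewrite -(Pi_extends_on_L ext (diag_meet_in n)).
  apply: Piphi_val.1 => //; first exact/PiL_of_L/diag_meet_in.
  by apply: le_diag_meet => // k m; case: (convA k) => _ [+ _]; apply.
apply: infs => k /=; have [convAk infAk] := convA k.
apply: (ext convAk infAk).2 => n; apply: le_trans (ydiag (maxn n k)) _.
apply: le_trans (phi_mono _ _ (diag_meet_in _) (LA k _) (diag_meet_le _ (leq_maxr n k))) _.
by apply: phi_mono => //; apply: decreasing_le; rewrite ?leq_maxl.
Qed.

End Diagonal.

Lemma Pi_complete_PiL (Piphi : V -> E) :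
  valuation (PiL L phi) Piphi -> Pi_extends Piphi -> Pi_complete (PiL L phi) Piphi.
Proof.
move=> Piphi_val ext xs [PiLxs [Dxs [_ [s infs]]]] x infx.
have [A convA] := functional_choice _ PiLxs.
have DA k : decreasing (A k) by case: (convA k) => [[_ []]].
have infdiag := diag_meet_inf DA (fun k => (convA k).2) infx.
have infphi := diag_meet_phi_inf Piphi_val ext convA Dxs infs.
have convdiag : phi_convergent L phi (diag_meet A).
  split; first exact: diag_meet_in.
  split; first exact: diag_meet_decreasing.
  by split; [exists x | exists s].
split; first by exists (diag_meet A).
by rewrite -(is_inf_unique infphi (ext _ convdiag _ infdiag)).
Qed.

End PiExtension.

Theorem mainTheorem4 (d : Order.disp_t) (V : latticeType d) (L : V -> Prop)
  (E : porderZmodType) (phi : V -> E) :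
  valuation_system L phi ->
  (Pi_extendible L phi <->
   exists (C : V -> Prop) (psi : V -> E),
     sublattice C /\ valuation C psi /\ Pi_complete C psi /\
     extends L phi C psi).
Proof.
move=> [distr [L_sub [HE [RC phi_val]]]]; split.
- move=> [Piphi [Piphi_val ext]]; exists (PiL L phi), Piphi.
  split; first exact: PiL_sublattice.
  split=> //; split; first exact: Pi_complete_PiL.
  by split; [apply: PiL_of_L | apply: Pi_extends_on_L].
- move=> [C [psi [_ [psi_val [psiC ext]]]]]; exists psi.
  have PiL_C x : PiL L phi x -> C x.
    by move=> [a [conva infx]]; case: (Pi_complete_extends ext psiC conva infx).
  split; first exact: valuation_sub psi_val.
  by move=> a conva x infx; case: (Pi_complete_extends ext psiC conva infx).
Qed.
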